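(* Let $\Lambda$ be a subcategory of $\Gamma$ containing $\Theta$, let $\mathcal C$ be a category, $\mathcal A$ an abelian category, and $T:\mathcal C\wr\Lambda\to\mathcal A$ a functor such that $T(\varnothing)=0$. Then: (1) For every morphism $(f,(\gamma_e)_{e\in s(f)}) : C\to D$ of $\mathcal C\wr\Lambda$ with $C=(E,(C_e)_{e\in E})$, and every $M\subset E$, the image of $cr_M(T)(C)$ under $T(f,(\gamma_e))$ is contained in $cr_{f(M)}(T)(D)$, and this image is zero if $M$ is not contained in $s(f)$. (2) For every object $C=(E,(C_e)_{e\in E})$ and $M\subset E$, the morphism $T(i^C_M)$ restricts to an isomorphism $cr(T)(\rho_M(C))\to cr_M(T)(C)$. (3) For every object $C=(E,(C_e)_{e\in E})$ of $\mathcal C\wr\Lambda$ one has $T(C)=\bigoplus_{M\subset E} cr_M(T)(C)$.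
   Context: $\Gamma$ is the category whose objects are finite sets and whose morphisms $E\to F$ are partially defined functions $f$ (defined on a subset $s(f)\subset E$, its domain of definition), with the usual composition of partial functions; $\Theta$ is the subcategory with the same objects whose morphisms are the injective partial functions. For $M\subset E$, $i^E_M: M\to E$ is the inclusion and $r^M_E:E\to M$ is the partial function defined on $M$ and equal to the identity there. For a category $\mathcal C$ and a subcategory $\Lambda$ of $\Gamma$ containing $\Theta$, $\mathcal C\wr\Lambda$ is the category whose objects are pairs $(E,(C_e)_{e\in E})$ with $E$ a finite set and $C_e$ objects of $\mathcal C$, and whose morphisms $(E,(C_e))\to(F,(C'_e))$ are pairs $(f,(\gamma_e)_{e\in s(f)})$ with $f:E\to F$ a morphism of $\Lambda$ and $\gamma_e:C_e\to C'_{f(e)}$ morphisms of $\mathcal C$; composition is $(g,(\delta_x))\circ(f,(\gamma_e))=(g\circ f,(\delta_{f(e)}\circ\gamma_e)_{e\in s(g\circ f)})$. $\varnothing$ denotes the object with empty index set. For $C=(E,(C_e)_{e\in E})$ and $M\subset E$, $\rho_M(C)=(M,(C_e)_{e\in M})$; $i^C_M:\rho_M(C)\to C$ is $(i^E_M,(\mathrm{id}_{C_e})_{e\in M})$, $r^M_C:C\to\rho_M(C)$ is $(r^M_E,(\mathrm{id}_{C_e})_{e\in M})$, and $d_{C,M}=i^C_M\circ r^M_C$. The cross effects are $$cr_M(T)(C)=\bigcap_{U\subsetneq M}\ker T(d_{C,U})\ \cap\ \mathrm{im}\,T(d_{C,M}),\qquad cr(T)(C)=cr_E(T)(C).$$ 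*)

From HB Require Import structures.
From mathcomp Require Import all_boot all_algebra.

Set Implicit Arguments.
Unset Strict Implicit.
Unset Printing Implicit Defensive.
Import GRing.Theory.
Local Open Scope ring_scope.

Record Cat : Type := {
  cob : Type;
  chom : cob -> cob -> Type;
  ccomp : forall X Y Z, chom Y Z -> chom X Y -> chom X Z;
  cid : forall X, chom X X;
  ccompA : forall X Y Z W (h : chom Z W) (g : chom Y Z) (f : chom X Y),
      ccomp (ccomp h g) f = ccomp h (ccomp g f);
  ccomp1l : forall X Y (f : chom X Y), ccomp (cid Y) f = f;
  ccomp1r : forall X Y (f : chom X Y), ccomp f (cid X) = f
}.
Arguments ccomp {c X Y Z}.
Arguments cid {c}.

Record PreAdd : Type := {
  aob : Type;
  ahom : aob -> aob -> zmodType;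
  acomp : forall X Y Z, ahom Y Z -> ahom X Y -> ahom X Z;
  aid : forall X, ahom X X;
  acompA : forall X Y Z W (h : ahom Z W) (g : ahom Y Z) (f : ahom X Y),
      acomp (acomp h g) f = acomp h (acomp g f);
  acomp1l : forall X Y (f : ahom X Y), acomp (aid Y) f = f;
  acomp1r : forall X Y (f : ahom X Y), acomp f (aid X) = f;
  acompDl : forall X Y Z (g h : ahom Y Z) (f : ahom X Y),
      acomp (g + h) f = acomp g f + acomp h f;
  acompDr : forall X Y Z (g : ahom Y Z) (f f' : ahom X Y),
      acomp g (f + f') = acomp g f + acomp g f'
}.
Arguments acomp {p X Y Z}.
Arguments aid {p}.

Section AbelianDefs.
Variable A : PreAdd.

Definition is_mono (X Y : aob A) (m : ahom X Y) : Prop :=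
  forall Z (g h : ahom Z X), acomp m g = acomp m h -> g = h.

Definition is_epi (X Y : aob A) (e : ahom X Y) : Prop :=
  forall Z (g h : ahom Y Z), acomp g e = acomp h e -> g = h.

Definition is_kernel (X Y K : aob A) (f : ahom X Y) (k : ahom K X) : Prop :=
  acomp f k = 0 /\
  forall Z (g : ahom Z X), acomp f g = 0 -> exists! h : ahom Z K, acomp k h = g.

Definition is_cokernel (X Y Q : aob A) (f : ahom X Y) (c : ahom Y Q) : Prop :=
  acomp c f = 0 /\
  forall Z (g : ahom Y Z), acomp g f = 0 -> exists! h : ahom Q Z, acomp h c = g.

End AbelianDefs.

Record AbCat : Type := {
  ab_pa :> PreAdd;
  ab_zero : exists O : aob ab_pa, aid O = 0;
  ab_biprod : forall X Y : aob ab_pa, exists (P : aob ab_pa)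
      (i1 : ahom X P) (i2 : ahom Y P) (p1 : ahom P X) (p2 : ahom P Y),
      [/\ acomp p1 i1 = aid X, acomp p2 i2 = aid Y,
          acomp p1 i2 = 0, acomp p2 i1 = 0 &
          acomp i1 p1 + acomp i2 p2 = aid P];
  ab_ker : forall (X Y : aob ab_pa) (f : ahom X Y), exists K (k : ahom K X), is_kernel f k;
  ab_coker : forall (X Y : aob ab_pa) (f : ahom X Y), exists Q (c : ahom Y Q), is_cokernel f c;
  ab_mono_normal : forall (X Y : aob ab_pa) (m : ahom X Y), is_mono m ->
      exists Z (f : ahom Y Z), is_kernel f m;
  ab_epi_normal : forall (X Y : aob ab_pa) (e : ahom X Y), is_epi e ->
      exists Z (f : ahom Z X), is_cokernel f e
}.

(* A partial map E -> F is a function E -> option F; its domain of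
   definition is s(f) = [set e | f e != None]. *)
Definition pcomp (E F G : finType) (f : E -> option F) (g : F -> option G)
  : E -> option G := fun e => match f e with Some y => g y | None => None end.

Definition pinjective (E F : finType) (f : E -> option F) : Prop :=
  forall e e' y, f e = Some y -> f e' = Some y -> e = e'.

Definition pdom (E F : finType) (f : E -> option F) : {set E} :=
  [set e | f e != None].

Definition pimage (E F : finType) (f : E -> option F) (M : {set E}) : {set F} :=
  [set y | [exists e in M, f e == Some y]].

(* A subcategory Lambda of Gamma containing Theta: a class of partial maps
   closed under composition and containing all injective partial maps
   (in particular identities); it has all finite sets as objects. *)
Record PSubcat : Type := {
  lam : forall E F : finType, (E -> option F) -> Prop;
  lam_comp : forall (E F G : finType) (f : E -> option F) (g : F -> option G),
      lam f -> lam g -> lam (pcomp f g);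
  lam_inj : forall (E F : finType) (f : E -> option F), pinjective f -> lam f
}.

Section Wreath.
Variables (C : Cat) (L : PSubcat).

Record wob : Type := WOb { widx : finType; wfam : widx -> cob C }.

Record wmor (X Y : wob) : Type := WMor {
  wf : widx X -> option (widx Y);
  wlam : lam L wf;
  wgam : forall e y, wf e = Some y -> @chom C (@wfam X e) (@wfam Y y)
}.

Lemma none_some_False (T : Type) (z : T) : None = Some z -> False.
Proof. by []. Qed.

Definition wcomp_gam (X Y Z : wob) (f : wmor X Y) (g : wmor Y Z)
    (e : widx X) (z : widx Z) : pcomp (wf f) (wf g) e = Some z ->
    @chom C (@wfam X e) (@wfam Z z) :=
  match wf f e as o return
        (wf f e = o ->
         match o with Some y => wf g y | None => None end = Some z ->
         @chom C (@wfam X e) (@wfam Z z)) with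
  | Some y => fun hf hg => ccomp (@wgam _ _ g _ _ hg) (@wgam _ _ f _ _ hf)
  | None => fun _ hn => match none_some_False hn with end
  end erefl.

(* composition: wcomp f g = g o f *)
Definition wcomp (X Y Z : wob) (f : wmor X Y) (g : wmor Y Z) : wmor X Z :=
  @WMor X Z (pcomp (wf f) (wf g)) (lam_comp (wlam f) (wlam g))
        (@wcomp_gam X Y Z f g).

Definition eqhom (I : Type) (F : I -> cob C) (a b : I) (h : a = b)
  : @chom C (F a) (F b) :=
  match h in _ = b' return @chom C (F a) (F b') with erefl => cid (F a) end.

Lemma pinjective_Some (E : finType) : pinjective (fun e : E => Some e).
Proof. by move=> e e' y [->] [->]. Qed.

Definition wid (X : wob) : wmor X X :=
  @WMor X X (fun e => Some e) (lam_inj L (@pinjective_Some (widx X)))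
        (fun e y h => eqhom (@wfam X) (Some_inj h)).

Definition wrho (X : wob) (M : {set widx X}) : wob :=
  @WOb {x : widx X | x \in M} (fun x => @wfam X (val x)).

Lemma pinjective_incl (X : wob) (M : {set widx X}) :
  pinjective (fun x : {x : widx X | x \in M} => Some (val x)).
Proof. by move=> e e' y [h1] [h2]; apply: val_inj; rewrite /= h1 h2. Qed.

Lemma insub_SomeK (T : eqType) (P : pred T) (sT : subType P) (e : T) (y : sT) :
  insub e = Some y -> e = val y.
Proof. by case: insubP => // u _ <- [->]. Qed.

Lemma pinjective_retr (X : wob) (M : {set widx X}) :
  pinjective (fun e : widx X => (insub e : option {x : widx X | x \in M})).
Proof. by move=> e e' y /insub_SomeK -> /insub_SomeK ->. Qed.

Definition wincl (X : wob) (M : {set widx X}) : wmor (wrho M) X :=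
  @WMor (wrho M) X (fun x => Some (val x)) (lam_inj L (@pinjective_incl X M))
        (fun x y h => eqhom (@wfam X) (Some_inj h)).

Definition wretr (X : wob) (M : {set widx X}) : wmor X (wrho M) :=
  @WMor X (wrho M) (fun e => insub e) (lam_inj L (@pinjective_retr X M))
        (fun e y h => eqhom (@wfam X) (insub_SomeK h)).

Definition wd (X : wob) (M : {set widx X}) : wmor X X :=
  wcomp (wretr M) (wincl M).

Definition wempty : wob := @WOb void (fun v => match v with end).

End Wreath.

Record WFunctor (C : Cat) (L : PSubcat) (A : PreAdd) : Type := {
  Fob : wob C -> aob A;
  Fmor : forall X Y : wob C, wmor L X Y -> ahom (Fob X) (Fob Y);
  Fmor_id : forall X : wob C, Fmor (wid L X) = aid (Fob X);
  Fmor_comp : forall (X Y Z : wob C) (f : wmor L X Y) (g : wmor L Y Z),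
      Fmor (wcomp f g) = acomp (Fmor g) (Fmor f)
}.
Arguments Fob {C L A}.
Arguments Fmor {C L A} _ {X Y}.

(* A subobject S of an object Y of A is described by the class of
   morphisms g : Z -> Y factoring through S.  For S = ker f this means
   f o g = 0; for S = im f = ker (coker f) it means that every c with
   c o f = 0 satisfies c o g = 0; intersections are conjunctions. *)

Definition in_ker (A : PreAdd) (X Y Z : aob A) (f : ahom X Y) (g : ahom Z X)
  : Prop := acomp f g = 0.

Definition in_im (A : PreAdd) (X Y Z : aob A) (f : ahom X Y) (g : ahom Z Y)
  : Prop := forall W (c : ahom Y W), acomp c f = 0 -> acomp c g = 0.

(* g : Z -> T(X) factors through cr_M(T)(X)
     = \bigcap_{U \subsetneq M} ker T(d_{X,U}) \cap im T(d_{X,M}) *)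
Definition in_cr (C : Cat) (L : PSubcat) (A : PreAdd) (T : WFunctor C L A)
    (X : wob C) (M : {set widx X}) (Z : aob A) (g : ahom Z (Fob T X)) : Prop :=
  (forall U : {set widx X}, U \proper M -> in_ker (Fmor T (wd L U)) g) /\
  in_im (Fmor T (wd L M)) g.
Arguments in_cr {C L A} T {X} M {Z} g.

From HB Require Import structures.
From mathcomp Require Import all_boot all_algebra.
From Stdlib Require Import ProofIrrelevance FunctionalExtensionality.
Import GRing.Theory.
Local Open Scope ring_scope.
Set Implicit Arguments.
Unset Strict Implicit.

(* The endomorphisms e_U := T(d_{C,U}) of T(C) are idempotents with
   e_U e_V = e_{U ∩ V} and e_E = id, so g lies in cr_M(T)(C) iff
   e_U g = g for U ⊇ M and e_U g = 0 otherwise.  Naturality of d gives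
   T(φ) e_{φ^{-1}(V)} = e_V T(φ), which yields (1); r^M_C i^C_M = id and
   i^C_M r^M_C = d_{C,M} then give (2).  For (3), the Möbius inversions
   p_M := Σ_{U ⊆ M} (-1)^{|M∖U|} e_U are projections onto cr_M(T)(C) which
   sum to the identity and satisfy p_M g = 0 for g in cr_N(T)(C), N ≠ M. *)

Section WreathCategory.
Variables (C : Cat) (L : PSubcat).

Lemma eq_wmor (X Y : wob C) (f g : wmor L X Y) :
  (forall e, wf f e = wf g e) ->
  (forall e y (hf : wf f e = Some y) (hg : wf g e = Some y), wgam hf = wgam hg) ->
  f = g.
Proof.
case: f => f lf gf; case: g => g lg gg /= eq_fg.
have eq_f := functional_extensionality _ _ eq_fg; subst g => eq_gam.
rewrite (proof_irrelevance _ lf lg); congr WMor.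
do 3!apply: functional_extensionality_dep => ?; exact: eq_gam.
Qed.

Lemma wf_wcomp (X Y Z : wob C) (f : wmor L X Y) (g : wmor L Y Z) e :
  wf (wcomp f g) e = if wf f e is Some y then wf g y else None.
Proof. by []. Qed.

Lemma wgam_wcomp (X Y Z : wob C) (f : wmor L X Y) (g : wmor L Y Z) e y z
    (hf : wf f e = Some y) (hg : wf g y = Some z)
    (h : wf (wcomp f g) e = Some z) :
  wgam h = ccomp (wgam hg) (wgam hf).
Proof.
(* Generalize the scrutinee [wf f e] of the dependent match in [wcomp_gam]. *)
pose gam_at o (ho : wf f e = o)
    (h' : (if o is Some y' then wf g y' else None) = Some z) :=
  match o as o' return wf f e = o' ->
      (if o' is Some y' then wf g y' else None) = Some z -> chom (wfam e) (wfam z)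
  with
  | Some y' => fun hf' hg' => ccomp (wgam hg') (wgam hf')
  | None => fun _ hn => match none_some_False hn with end
  end ho h'.
suff gam_atE o ho h' : @gam_at o ho h' = ccomp (wgam hg) (wgam hf) by exact: gam_atE.
case: o ho h' => [y' ho h'|//]; rewrite /gam_at.
have yy' : y = y' by apply: Some_inj; rewrite -hf -ho.
case: y' / yy' ho h' => ho h'.
by rewrite (proof_irrelevance _ ho hf) (proof_irrelevance _ h' hg).
Qed.

Lemma eqhom_id (I : Type) (F : I -> cob C) (a : I) (h : a = a) :
  eqhom F h = cid (F a).
Proof. by rewrite (proof_irrelevance _ h erefl). Qed.

Lemma wf_wd (X : wob C) (U : {set widx X}) e :
  wf (wd L U) e = if e \in U then Some e else None.
Proof. by rewrite wf_wcomp /=; case: insubP => [u -> <-|/negbTE ->]. Qed.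

Lemma wgam_wd (X : wob C) (U : {set widx X}) e (h : wf (wd L U) e = Some e) :
  wgam h = cid (wfam e).
Proof.
have eU : e \in U by move: h; rewrite wf_wd; case: ifP.
have hr : wf (wretr L U) e = Some (exist _ e eU) by rewrite /= insubT.
by rewrite (wgam_wcomp hr (erefl : wf (wincl L U) _ = _)) /= !eqhom_id ccomp1l.
Qed.

Lemma wd_setT (X : wob C) : wd L [set: widx X] = wid L X.
Proof.
apply: eq_wmor => [e|e y h1 h2]; first by rewrite wf_wd in_setT.
have ey := Some_inj h2.
by case: y / ey h1 h2 => h1 h2; rewrite wgam_wd /= eqhom_id.
Qed.

Lemma wcomp_wd (X : wob C) (U V : {set widx X}) :
  wcomp (wd L U) (wd L V) = wd L (U :&: V).
Proof.
apply: eq_wmor => [e|e y h1 h2].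
  by rewrite wf_wcomp !wf_wd inE; case: (e \in U); rewrite ?wf_wd.
have [ye /setIP [eU eV]] : y = e /\ e \in U :&: V.
  by move: h2; rewrite wf_wd; case: ifP => // ? [].
subst y.
have hU : wf (wd L U) e = Some e by rewrite wf_wd eU.
have hV : wf (wd L V) e = Some e by rewrite wf_wd eV.
by rewrite (wgam_wcomp hU hV) !wgam_wd ccomp1l.
Qed.

Definition wpreim (X Y : wob C) (f : wmor L X Y) (V : {set widx Y}) :
  {set widx X} := [set e | if wf f e is Some y then y \in V else false].

Lemma wcomp_wd_preim (X Y : wob C) (f : wmor L X Y) (V : {set widx Y}) :
  wcomp f (wd L V) = wcomp (wd L (wpreim f V)) f.
Proof.
apply: eq_wmor => [e|e z h1 h2].
  rewrite [LHS]wf_wcomp [RHS]wf_wcomp wf_wd inE.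
  by case fe: (wf f e) => [y|]; rewrite ?wf_wd ?fe //; case: ifP.
have [y hf] : exists y, wf f e = Some y.
  by move: (h1); rewrite wf_wcomp; case: (wf f e) => [y|] //; exists y.
have [yV yz] : y \in V /\ y = z.
  by move: (h1); rewrite wf_wcomp hf wf_wd; case: ifP => // ? [].
subst z.
have hV : wf (wd L V) y = Some y by rewrite wf_wd yV.
have hP : wf (wd L (wpreim f V)) e = Some e by rewrite wf_wd inE hf yV.
by rewrite (wgam_wcomp hf hV) (wgam_wcomp hP hf) !wgam_wd ccomp1l ccomp1r.
Qed.

Lemma wcomp_wincl_wretr (X : wob C) (M : {set widx X}) :
  wcomp (wincl L M) (wretr L M) = wid L (wrho M).
Proof.
apply: eq_wmor => [x|x y h1 h2]; first by rewrite wf_wcomp /= valK.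
have xy := Some_inj h2.
case: y / xy h1 h2 => h1 h2.
have hr : wf (wretr L M) (val x) = Some x by rewrite /= valK.
by rewrite (wgam_wcomp (erefl : wf (wincl L M) x = _) hr) /= !eqhom_id ccomp1l.
Qed.

Lemma pimage_wincl (X : wob C) (M : {set widx X}) :
  pimage (wf (wincl L M)) [set: widx (wrho M)] = M.
Proof.
apply/setP => x; rewrite inE; apply/existsP/idP => [[y /andP [_ /eqP [<-]]]|xM].
  exact: valP.
by exists (exist _ x xM); rewrite inE eqxx.
Qed.

Lemma pimage_wretr (X : wob C) (M : {set widx X}) :
  pimage (wf (wretr L M)) M = [set: widx (wrho M)].
Proof.
apply/setP => y; rewrite !inE; apply/existsP; exists (val y).
by rewrite (valP y) /= valK eqxx.
Qed.

Lemma subset_wpreim (X Y : wob C) (f : wmor L X Y) (M : {set widx X})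
    (V : {set widx Y}) :
  M \subset pdom (wf f) -> (M \subset wpreim f V) = (pimage (wf f) M \subset V).
Proof.
move=> /subsetP Mdom; apply/subsetP/subsetP => [MV y|MV e eM].
  by rewrite inE => /exists_inP [e eM /eqP fe]; move: (MV _ eM); rewrite inE fe.
move: (Mdom _ eM); rewrite !inE; case fe: (wf f e) => [y|] // _.
by apply: MV; rewrite inE; apply/exists_inP; exists e; rewrite ?fe.
Qed.

End WreathCategory.

Section PreAdditive.
Variable A : PreAdd.
Implicit Types X Y Z : aob A.

Lemma acomp0l X Y Z (f : ahom X Y) : acomp (0 : ahom Y Z) f = 0.
Proof. by apply: (addrI (acomp 0 f)); rewrite -acompDl !addr0. Qed.

Lemma acomp0r X Y Z (g : ahom Y Z) : acomp g (0 : ahom X Y) = 0.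
Proof. by apply: (addrI (acomp g 0)); rewrite -acompDr !addr0. Qed.

Lemma acompNl X Y Z (g : ahom Y Z) (f : ahom X Y) : acomp (- g) f = - acomp g f.
Proof. by apply/eqP; rewrite -subr_eq0 opprK -acompDl addNr acomp0l. Qed.

Lemma acompNr X Y Z (g : ahom Y Z) (f : ahom X Y) : acomp g (- f) = - acomp g f.
Proof. by apply/eqP; rewrite -subr_eq0 opprK -acompDr addNr acomp0r. Qed.

Lemma acomp_suml X Y Z (I : Type) (r : seq I) (P : pred I)
    (F : I -> ahom Y Z) (f : ahom X Y) :
  acomp (\sum_(i <- r | P i) F i) f = \sum_(i <- r | P i) acomp (F i) f.
Proof. by apply: (big_morph (acomp^~ f)) => [g h|]; rewrite ?acompDl ?acomp0l. Qed.

Lemma acomp_sumr X Y Z (I : Type) (r : seq I) (P : pred I)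
    (F : I -> ahom X Y) (g : ahom Y Z) :
  acomp g (\sum_(i <- r | P i) F i) = \sum_(i <- r | P i) acomp g (F i).
Proof. by apply: (big_morph (acomp g)) => [f h|]; rewrite ?acompDr ?acomp0r. Qed.

Lemma in_im_idemP Y Z (e : ahom Y Y) (g : ahom Z Y) :
  acomp e e = e -> in_im e g <-> acomp e g = g.
Proof.
move=> ee; split => [img|<- W c ce]; last by rewrite -acompA ce acomp0l.
have := img _ (aid Y - e); rewrite !acompDl !acompNl !acomp1l ee subrr.
by move=> /(_ erefl) /eqP; rewrite subr_eq0 eq_sym => /eqP.
Qed.

End PreAdditive.

Definition signed (V : zmodType) (b : bool) (x : V) := if b then - x else x.

Lemma signed0 (V : zmodType) b : signed b (0 : V) = 0.
Proof. by case: b; rewrite /signed ?oppr0. Qed.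

Lemma acomp_signedr (A : PreAdd) (X Y Z : aob A) b (g : ahom Y Z) (f : ahom X Y) :
  acomp g (signed b f) = signed b (acomp g f).
Proof. by case: b; rewrite /signed ?acompNr. Qed.

Lemma acomp_signedl (A : PreAdd) (X Y Z : aob A) b (g : ahom Y Z) (f : ahom X Y) :
  acomp (signed b g) f = signed b (acomp g f).
Proof. by case: b; rewrite /signed ?acompNl. Qed.

(* Toggling a ∈ N is a sign-reversing involution on the subsets of N. *)
Lemma sum_signed_toggle_eq0 (I : finType) (V : zmodType) (N : {set I}) a
    (F : {set I} -> V) :
  a \in N -> (forall W, F (a |: W) = F (W :\ a)) ->
  \sum_(W : {set I} | W \subset N) signed (odd #|N :\: W|) (F W) = 0.
Proof.
move=> aN Fa; rewrite (bigID (fun W : {set I} => a \in W)) /=.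
rewrite (reindex_onto (fun W : {set I} => a |: W) (fun W => W :\ a)) /=; last first.
  by move=> W /andP [_ aW]; rewrite setD1K.
have notin_a W : ((a |: W \subset N) && (a \in a |: W)) && ((a |: W) :\ a == W)
    = (W \subset N) && (a \notin W).
  rewrite subUset sub1set aN setU11 /=.
  have [aW|aW] := boolP (a \in W); last by rewrite setU1K // eqxx !andbT.
  have /negbTE-> : (a |: W) :\ a != W by apply: contraTneq aW => <-; rewrite setD11.
  by rewrite andbF /= andbF.
rewrite (eq_bigl _ _ notin_a) -big_split big1 // => W /andP [_ aW].
have -> : F (a |: W) = F W by rewrite -{2}(setU1K aW) -Fa setUA setUid.
have -> : #|N :\: W| = #|N :\: (a |: W)|.+1.
  by rewrite (cardsD1 a) !inE aN aW setDDl setUC.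
by rewrite /=; case: (odd _); rewrite /signed /= ?addNr ?subrr.
Qed.

Section CrossEffects.
Variables (L : PSubcat) (C : Cat) (A : PreAdd) (T : WFunctor C L A).

Local Notation Td U := (Fmor T (wd L U)).

Lemma Td_setT (X : wob C) : Td [set: widx X] = aid (Fob T X).
Proof. by rewrite wd_setT Fmor_id. Qed.

Lemma acomp_Td (X : wob C) (U V : {set widx X}) :
  acomp (Td V) (Td U) = Td (U :&: V).
Proof. by rewrite -Fmor_comp wcomp_wd. Qed.

Lemma in_crP (X : wob C) (M : {set widx X}) (Z : aob A) (g : ahom Z (Fob T X)) :
  in_cr T M g <-> forall U, acomp (Td U) g = if M \subset U then g else 0.
Proof.
have idem : acomp (Td M) (Td M) = Td M by rewrite acomp_Td setIid.
split => [[ker /(in_im_idemP _ idem) img] U|crg].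
  rewrite -img -acompA acomp_Td img; case: ifP => [MU|MU].
    by rewrite (setIidPl MU) img.
  by apply: (ker (M :&: U)); rewrite properE subsetIl subsetI subxx MU.
split => [U /properP [_ [e eM eU]]|]; last by apply/(in_im_idemP _ idem); rewrite crg subxx.
apply/eqP; rewrite /in_ker crg; case: ifP => // /subsetP /(_ e eM).
by rewrite (negPf eU).
Qed.

Lemma in_cr_Fmor (X Y : wob C) (f : wmor L X Y) (M : {set widx X})
    (Z : aob A) (g : ahom Z (Fob T X)) :
  in_cr T M g ->
  in_cr T (pimage (wf f) M) (acomp (Fmor T f) g) /\
  (~~ (M \subset pdom (wf f)) -> acomp (Fmor T f) g = 0).
Proof.
move/in_crP => crg.
have Td_f V : acomp (Td V) (acomp (Fmor T f) g) =
    acomp (Fmor T f) (if M \subset wpreim f V then g else 0).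
  by rewrite -acompA -Fmor_comp wcomp_wd_preim Fmor_comp acompA crg.
have kill : ~~ (M \subset pdom (wf f)) -> acomp (Fmor T f) g = 0.
  move=> Mdom; rewrite -[LHS]acomp1l -Td_setT Td_f ifF ?acomp0r //.
  apply: contraNF Mdom => /subset_trans; apply.
  by apply/subsetP => e; rewrite !inE; case: (wf f e).
split=> //; apply/in_crP => V.
have [Mdom|/kill->] := boolP (M \subset pdom (wf f)); last by rewrite acomp0r; case: ifP.
by rewrite Td_f subset_wpreim //; case: ifP; rewrite ?acomp0r.
Qed.

Lemma in_cr_wincl (X : wob C) (M : {set widx X}) (Z : aob A)
    (g : ahom Z (Fob T (wrho M))) :
  in_cr T [set: widx (wrho M)] g -> in_cr T M (acomp (Fmor T (wincl L M)) g).
Proof. by move=> /(in_cr_Fmor (wincl L M)) []; rewrite pimage_wincl. Qed.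

Lemma acomp_wincl_inj (X : wob C) (M : {set widx X}) (Z : aob A)
    (g : ahom Z (Fob T (wrho M))) :
  acomp (Fmor T (wincl L M)) g = 0 -> g = 0.
Proof.
move=> ig0; rewrite -[g]acomp1l -Fmor_id -(wcomp_wincl_wretr L M).
by rewrite Fmor_comp acompA ig0 acomp0r.
Qed.

Lemma in_cr_wincl_onto (X : wob C) (M : {set widx X}) (Z : aob A)
    (h : ahom Z (Fob T X)) :
  in_cr T M h -> exists g : ahom Z (Fob T (wrho M)),
    in_cr T [set: widx (wrho M)] g /\ acomp (Fmor T (wincl L M)) g = h.
Proof.
move=> crh; exists (acomp (Fmor T (wretr L M)) h); split.
  by have [] := in_cr_Fmor (wretr L M) crh; rewrite pimage_wretr.
by rewrite -acompA -Fmor_comp; have := proj1 (in_crP _ _) crh M; rewrite subxx.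
Qed.

Definition cr_proj (X : wob C) (M : {set widx X}) : ahom (Fob T X) (Fob T X) :=
  \sum_(U : {set widx X} | U \subset M) signed (odd #|M :\: U|) (Td U).

Lemma in_cr_proj (X : wob C) (M : {set widx X}) : in_cr T M (cr_proj M).
Proof.
apply/in_crP => V; rewrite /cr_proj acomp_sumr.
under eq_bigr do rewrite acomp_signedr acomp_Td.
case: ifP => [MV|/negbT /subsetPn [a aM aV]].
  by apply: eq_bigr => U UM; rewrite (setIidPl (subset_trans UM MV)).
apply: sum_signed_toggle_eq0 aM _ => W; congr (Td _).
by apply/setP => x; rewrite !inE; case: eqP => // ->; rewrite (negPf aV) !andbF.
Qed.

Lemma cr_proj_in_cr (X : wob C) (M N : {set widx X}) (Z : aob A)
    (g : ahom Z (Fob T X)) :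
  in_cr T N g -> acomp (cr_proj M) g = if N == M then g else 0.
Proof.
move=> /in_crP crg; rewrite /cr_proj acomp_suml.
under eq_bigr do rewrite acomp_signedl crg.
have [<-|NM] := eqVneq N M.
  rewrite (bigD1 N) //= subxx setDv cards0 big1 ?addr0 // => U /andP [UN nUN].
  by rewrite ifF ?signed0 //; apply: contraNF nUN => NU; rewrite eqEsubset UN NU.
have [NsM|/subsetPn [a aN aM]] := boolP (N \subset M); last first.
  rewrite big1 // => U UM; rewrite ifF ?signed0 //.
  by apply: contraNF aM => /subsetP/(_ a aN); apply: (subsetP UM).
have /subsetPn [a aM aN] : ~~ (M \subset N) by rewrite eqEsubset NsM in NM.
apply: sum_signed_toggle_eq0 aM _ => W.
congr (if _ then _ else _).
by rewrite -[LHS]andbT -aN -subsetD1 setDUl setDv set0U.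
Qed.

Lemma sum_cr_proj (X : wob C) : \sum_(M : {set widx X}) cr_proj M = aid (Fob T X).
Proof.
rewrite /cr_proj (exchange_big_dep xpredT) //= (bigD1 setT) //=.
rewrite (eq_bigl (pred1 setT)) => [|M]; last by rewrite subTset.
rewrite big_pred1_eq setDv cards0 Td_setT big1 ?addr0 // => U UT.
have /subsetPn [a _ aU] : ~~ (setT \subset U) by rewrite subTset.
rewrite (reindex_inj (@setC_inj _)) /=.
rewrite (eq_bigl (fun W : {set widx X} => W \subset ~: U)) => [|W]; last by rewrite subsetC.
under eq_bigr do rewrite setDE setIC -setDE.
by apply: (@sum_signed_toggle_eq0 _ _ _ a); rewrite ?inE.
Qed.

Lemma in_cr_sum_eq0 (X : wob C) (Z : aob A) (g : {set widx X} -> ahom Z (Fob T X)) :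
  (forall M, in_cr T M (g M)) -> \sum_(M : {set widx X}) g M = 0 ->
  forall M, g M = 0.
Proof.
move=> crg sum0 M; have := congr1 (acomp (cr_proj M)) sum0.
rewrite acomp_sumr acomp0r (bigD1 M) //= (cr_proj_in_cr _ (crg M)) eqxx.
by rewrite big1 ?addr0 // => N NM; rewrite (cr_proj_in_cr _ (crg N)) (negPf NM).
Qed.

End CrossEffects.

Theorem mainTheorem3 (L : PSubcat) (C : Cat) (A : AbCat) (T : WFunctor C L A)
  (HT0 : aid (Fob T (wempty C)) = 0) :
  (forall (X Y : wob C) (phi : wmor L X Y) (M : {set widx X})
          (Z : aob A) (g : ahom Z (Fob T X)),
     in_cr T M g ->
     in_cr T (pimage (wf phi) M) (acomp (Fmor T phi) g) /\
     (~~ (M \subset pdom (wf phi)) -> acomp (Fmor T phi) g = 0))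
  /\
  (forall (X : wob C) (M : {set widx X}),
     (forall (Z : aob A) (g : ahom Z (Fob T (wrho M))),
        in_cr T [set: widx (wrho M)] g ->
        in_cr T M (acomp (Fmor T (wincl L M)) g))
     /\ (forall (Z : aob A) (g : ahom Z (Fob T (wrho M))),
        in_cr T [set: widx (wrho M)] g ->
        acomp (Fmor T (wincl L M)) g = 0 -> g = 0)
     /\ (forall (Z : aob A) (h : ahom Z (Fob T X)),
        in_cr T M h ->
        exists g : ahom Z (Fob T (wrho M)),
          in_cr T [set: widx (wrho M)] g /\ acomp (Fmor T (wincl L M)) g = h))
  /\
  (forall X : wob C,
     (exists p : {set widx X} -> ahom (Fob T X) (Fob T X),
        (forall M, in_cr T M (p M)) /\
        \sum_(M : {set widx X}) p M = aid (Fob T X))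
     /\ (forall (Z : aob A) (g : {set widx X} -> ahom Z (Fob T X)),
        (forall M, in_cr T M (g M)) ->
        \sum_(M : {set widx X}) g M = 0 -> forall M, g M = 0)).
Proof.
split; first exact: in_cr_Fmor.
split=> [X M|X].
  split; first exact: in_cr_wincl.
  by split=> [Z g _|]; [exact: acomp_wincl_inj | exact: in_cr_wincl_onto].
split; last exact: in_cr_sum_eq0.
by exists (@cr_proj _ _ _ T X); split; [exact: in_cr_proj | exact: sum_cr_proj].
Qed.
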